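(* Let $\Gamma_2$ be a finite alphabet and $n\in\mathbb N$. There is a pushdown automaton with $3n+2$ states and stack alphabet consisting of two symbols, in whose runs the stack height never exceeds $n$, whose language is exactly $(\Gamma_2)^{2^n}$ (the set of words over $\Gamma_2$ of length $2^n$).
   Context: A pushdown automaton has transitions labelled by a letter or $\epsilon$ and a stack operation (push a symbol, pop a symbol, or no operation); it accepts a word if there is a run from the initial state with empty stack reading the word and ending in a final state with empty stack. *)

From mathcomp Require Import all_boot.
Set Implicit Arguments. Unset Strict Implicit. Unset Printing Implicit Defensive.

Inductive stack_op (S : Type) : Type :=
| Push of S
| Pop of S
| Nop.

(* A pushdown automaton over input alphabet A, with state set Q and stack
   alphabet S.  A transition (q, l, op, q') is labelled by a letter
   (Some a) or epsilon (None) and a stack operation. *)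
Record pda (A Q S : finType) := Pda {
  trans : Q -> option A -> stack_op S -> Q -> bool;
  init : Q;
  final : pred Q
}.

Section Runs.
Variables (A Q S : finType) (P : pda A Q S).

(* A configuration: current state and stack (top of stack = head). *)
Definition config := (Q * seq S)%type.

Definition apply_op (op : stack_op S) (st st' : seq S) : Prop :=
  match op with
  | Push s => st' = s :: st
  | Pop s => st = s :: st'
  | Nop => st' = st
  end.

Definition step (c : config) (l : option A) (c' : config) : Prop :=
  exists op, trans P c.1 l op c'.1 /\ apply_op op c.2 c'.2.

Definition label_word (l : option A) : seq A :=
  if l is Some a then [:: a] else [::].

Inductive reaches : config -> seq A -> config -> Prop :=
| reaches_refl c : reaches c [::] c
| reaches_step c l c' w c'' :
    step c l c' -> reaches c' w c'' -> reaches c (label_word l ++ w) c''.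

Definition init_config : config := (init P, [::]).

Definition accepts (w : seq A) : Prop :=
  exists f, final P f /\ reaches init_config w (f, [::]).

Definition stack_bounded (h : nat) : Prop :=
  forall w c, reaches init_config w c -> size c.2 <= h.

End Runs.

From mathcomp Require Import all_boot.
From mathcomp Require Import zify.

Set Implicit Arguments. Unset Strict Implicit. Unset Printing Implicit Defensive.

(* A block of 2^(k+1) letters is read recursively: push 0, read a block of 2^k
   letters, pop the 0, push 1, read another block of 2^k letters, pop the 1; a
   block of one letter is read directly.  The states are the phases [Before k]
   (about to read a block of 2^k letters), [After k] (such a block was just
   read) and [Between k] (between the two halves of a block of 2^(k+1)
   letters): n+1 + n+1 + n of them.  Read as a binary number with its top as
   least significant bit, the stack records the position in the recursion, so
   every reachable configuration determines the number of letters read so far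
   ([counter_inv]); this bounds the stack by n and forces accepted words to have
   length 2^n, while the recursion itself reads every word of that length. *)

Section Runs.
Variables (A Q S : finType) (P : pda A Q S).

Lemma step_reaches c l c' : step P c l c' -> reaches P c (label_word l) c'.
Proof.
by move=> st; rewrite -[label_word l]cats0; apply: reaches_step st (reaches_refl _ _).
Qed.

Lemma reaches_cat c u c' v c'' :
  reaches P c u c' -> reaches P c' v c'' -> reaches P c (u ++ v) c''.
Proof.
elim=> [//|c0 l c1 w c2 st _ IH] R.
by rewrite -catA; apply: reaches_step st _; apply: IH.
Qed.

Lemma reaches_invariant (I : config Q S -> nat -> Prop) :
  (forall c l c' p, step P c l c' -> I c p -> I c' (p + size (label_word l))) ->
  forall c w c' p, reaches P c w c' -> I c p -> I c' (p + size w).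
Proof.
move=> I_step c w c' p R.
elim: R p => [c0|c0 l c1 w0 c2 st _ IH] p Ic; first by rewrite addn0.
by rewrite size_cat addnA; apply/IH/(I_step _ _ _ _ st).
Qed.

End Runs.

Section Construction.
Variables (A : finType) (n : nat).

Inductive phase := Before of nat | After of nat | Between of nat.

Definition phase_ok (x : phase) : bool :=
  match x with Before k | After k => k <= n | Between k => k < n end.

Definition encode (x : phase) : nat :=
  match x with
  | Before k => k
  | After k => n.+1 + k
  | Between k => n.+1 + n.+1 + k
  end.

Notation state := 'I_(3 * n + 2).

Lemma state_gt0 : 0 < 3 * n + 2. Proof. by rewrite addn2. Qed.

(* Reducing modulo 3n+2 only matters for phases violating [phase_ok]. *)
Definition state_of (x : phase) : state := Ordinal (ltn_pmod (encode x) state_gt0).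

Definition phase_of (q : state) : phase :=
  if q <= n then Before q
  else if q <= n + n.+1 then After (q - n.+1)
  else Between (q - (n.+1 + n.+1)).

Lemma phase_of_ok q : phase_ok (phase_of q).
Proof.
have := ltn_ord q; rewrite /phase_of.
case: ifP => [//|/negbT]; case: ifP => /= + + +; lia.
Qed.

Lemma state_ofK x : phase_ok x -> phase_of (state_of x) = x.
Proof.
move=> x_ok; have lt_x : encode x < 3 * n + 2 by case: x x_ok => /= k; lia.
rewrite /phase_of /= modn_small //.
case: x x_ok lt_x => k /= k_ok _.
- by rewrite k_ok.
- rewrite ifN ?ifT ?addKn //; lia.
- rewrite ifN ?ifN ?addKn //; lia.
Qed.

Definition phase_trans (x : phase) (l : option A) (op : stack_op 'I_2) (y : phase) : bool :=
  match x, l, op, y with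
  | Before 0, Some _, Nop, After k' => k' == 0
  | Before k.+1, None, Push s, Before k' => (s == ord0) && (k' == k)
  | Between k, None, Push s, Before k' => (s == ord_max) && (k' == k)
  | After k, None, Pop s, Between k' => (s == ord0) && (k' == k)
  | After k, None, Pop s, After k' => (s == ord_max) && (k' == k.+1)
  | _, _, _, _ => false
  end.

Definition trans_of (q : state) (l : option A) (op : stack_op 'I_2) (q' : state) : bool :=
  phase_trans (phase_of q) l op (phase_of q').

Definition counter : pda A state 'I_2 :=
  Pda trans_of (state_of (Before n)) (pred1 (state_of (After n))).

Definition binary_value (st : seq 'I_2) : nat := foldr (fun (b : 'I_2) v => b + v.*2) 0 st.

Definition counter_inv (c : config state 'I_2) (p : nat) : Prop :=
  let: (q, st) := c in
  match phase_of q with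
  | Before k => size st = n - k /\ p = binary_value st * 2 ^ k
  | After k => size st = n - k /\ p = (binary_value st).+1 * 2 ^ k
  | Between k => size st = n - k.+1 /\ p = (binary_value st).*2.+1 * 2 ^ k
  end.

Lemma counter_inv_step c l c' p :
  step counter c l c' -> counter_inv c p -> counter_inv c' (p + size (label_word l)).
Proof.
case: c c' => [q st] [q' st'] [op [/= tr app]].
rewrite /counter_inv; move: tr (phase_of_ok q) (phase_of_ok q'); rewrite /trans_of /phase_trans.
case: (phase_of q) => [[|k]|k|k]; case: (phase_of q') => k';
  case: l => [a|]; case: op app => [s|s|] //= app; subst.
- by move=> /eqP-> _ _ [-> ->]; rewrite !expn0 !muln1 addn1.
- move=> /andP[/eqP-> /eqP->] k_lt _ [size_st ->] /=.
  by rewrite expnS size_st; split; lia.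
- move=> /andP[/eqP-> /eqP->] _ _ [/= size_st ->].
  by rewrite expnS; split; lia.
- move=> /andP[/eqP-> /eqP->] _ _ [/= size_st ->].
  by split; lia.
- move=> /andP[/eqP-> /eqP->] k_lt _ [size_st ->] /=.
  by rewrite size_st; split; lia.
Qed.

Lemma reaches_phase_trans x l op y st st' :
  phase_ok x -> phase_ok y -> phase_trans x l op y -> apply_op op st st' ->
  reaches counter (state_of x, st) (label_word l) (state_of y, st').
Proof.
move=> x_ok y_ok xy app; apply: step_reaches; exists op.
by rewrite /= /trans_of !state_ofK.
Qed.

Lemma reaches_block k st w : k <= n -> size w = 2 ^ k ->
  reaches counter (state_of (Before k), st) w (state_of (After k), st).
Proof.
elim: k st w => [|k IH] st w k_lt size_w.
  case: w size_w => [|a [|]] // _.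
  exact: (reaches_phase_trans (l := Some a) (op := Nop _)).
have [w1 [w2 [-> size_w1 size_w2]]] :
    exists w1 w2, [/\ w = w1 ++ w2, size w1 = 2 ^ k & size w2 = 2 ^ k].
  have le_w : 2 ^ k <= size w by rewrite size_w expnS; lia.
  exists (take (2 ^ k) w), (drop (2 ^ k) w).
  by rewrite cat_take_drop size_drop size_takel // size_w expnS; split => //; lia.
have eps_step x op y st0 st0' : phase_ok x -> phase_ok y -> phase_trans x None op y ->
    apply_op op st0 st0' -> reaches counter (state_of x, st0) [::] (state_of y, st0').
  exact: (reaches_phase_trans (l := None)).
have k_le : k <= n := ltnW k_lt.
rewrite -[w1 ++ w2]/([::] ++ w1 ++ [::] ++ [::] ++ w2) -[w2]cats0.
apply: (reaches_cat (eps_step (Before k.+1) (Push ord0) (Before k) _ _ k_lt k_le _ _)) => //=.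
apply: (reaches_cat (IH _ _ k_le size_w1)).
apply: (reaches_cat (eps_step (After k) (Pop ord0) (Between k) _ _ k_le k_lt _ _)) => //=.
apply: (reaches_cat (eps_step (Between k) (Push ord_max) (Before k) _ _ k_lt k_le _ _)) => //=.
apply: (reaches_cat (IH _ _ k_le size_w2)).
by apply: (eps_step (After k) (Pop ord_max) (After k.+1) _ _ k_le k_lt) => /=.
Qed.

Lemma counter_inv_reaches w c :
  reaches counter (init_config counter) w c -> counter_inv c (size w).
Proof.
move=> run; rewrite -[size w]add0n; apply: (reaches_invariant counter_inv_step run).
by rewrite /counter_inv /= state_ofK //= subnn.
Qed.

Lemma counter_stack_bounded : stack_bounded counter n.
Proof.
by move=> w [q st] /counter_inv_reaches /=; case: phase_of => k [-> _]; rewrite leq_subr.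
Qed.

Lemma counter_accepts w : accepts counter w <-> size w = 2 ^ n.
Proof.
split=> [[f [/eqP-> /counter_inv_reaches]]|size_w].
  by rewrite /counter_inv state_ofK //= mul1n => -[].
by exists (state_of (After n)); split; [exact: eqxx | exact: reaches_block].
Qed.

End Construction.

Theorem claim4p5 (Gamma2 : finType) (n : nat) :
  exists P : pda Gamma2 'I_(3 * n + 2) 'I_2,
    stack_bounded P n /\
    (forall w : seq Gamma2, accepts P w <-> size w = 2 ^ n).
Proof.
exists (counter Gamma2 n).
by split; [exact: counter_stack_bounded | exact: counter_accepts].
Qed.
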